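(* For every pair of disjoint sets $A,B\subseteq\{0,1,2\}^n$, \[ |\partial A| + |\partial B| \ge 3^{-n}\,|A|\,|B|. \]
   Context: For $S\subseteq\{0,1,2\}^n$ and $1\le i\le n$, the upper edge border in direction $i$ is $\partial_i S=\{(v_{-i},v_i,v_i') : (v_{-i},v_i)\in S,\ (v_{-i},v_i')\notin S,\ v_i<v_i'\}$, where $v_i,v_i'\in\{0,1,2\}$ and $(v_{-i},t)$ denotes the vector agreeing with $v$ off coordinate $i$ and equal to $t$ at coordinate $i$. The upper edge border is $\partial S=\bigcup_i\partial_i S$ (a disjoint union), so $|\partial S|=\sum_i|\partial_i S|$. *)

From HB Require Import structures.
From mathcomp Require Import all_boot all_order all_algebra.
Set Implicit Arguments. Unset Strict Implicit. Unset Printing Implicit Defensive.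

Definition cube (n : nat) := {ffun 'I_n -> 'I_3}.

Definition setc n (v : cube n) (i : 'I_n) (t : 'I_3) : cube n :=
  [ffun j => if j == i then t else v j].

(* Upper edge border in direction i. The triple (v_{-i}, v_i, v_i') is
   encoded by the pair (v, v_i') : v determines v_{-i} and v_i. *)
Definition border_dir n (S : {set cube n}) (i : 'I_n) : {set cube n * 'I_3} :=
  [set p | [&& p.1 \in S, setc p.1 i p.2 \notin S & (p.1 i < p.2)%N]].

Definition border_card n (S : {set cube n}) : nat :=
  \sum_(i < n) #|border_dir S i|.

From HB Require Import structures.
From mathcomp Require Import all_boot all_order all_algebra zify.
Import Order.TTheory GRing.Theory Num.Theory.
Set Implicit Arguments. Unset Strict Implicit. Unset Printing Implicit Defensive.

(* We prove the stronger, localised statement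
     |A ∩ C| |B ∩ C| <= 3^k (edges of ∂A inside C + edges of ∂B inside C)
   for every k-dimensional subcube C of {0,1,2}^n whose free coordinates are
   the first k ones, counting only border edges in those k directions; the
   theorem is the case k = n, C = {0,1,2}^n.
   A (k+1)-dimensional subcube splits along coordinate k into three slices
   C_0, C_1, C_2 of dimension k, and its border edges split into the edges
   inside the slices plus the edges in direction k.  For s < t, every point
   of S ∩ C_s either has its neighbour in C_t inside S (an injection into
   S ∩ C_t) or contributes a border edge from slice s to slice t, so
   |S ∩ C_s| <= |edges s -> t| + |S ∩ C_t|.  A purely arithmetic lemma
   (a rearrangement bound for the cross terms a_s b_t + a_t b_s) then combines
   the three induction hypotheses with these slice comparisons. *)

Lemma cross_le_diag (N as_ at_ bs bt ya yb : nat) :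
  as_ <= N -> at_ <= N -> bs <= N -> bt <= N ->
  as_ <= ya + at_ -> bs <= yb + bt ->
  as_ * bt + at_ * bs <= as_ * bs + at_ * bt + N * (ya + yb).
Proof.
move=> asN atN bsN btN drop_a drop_b.
have [le_a|lt_a] := leqP as_ at_; have [le_b|lt_b] := leqP bs bt.
- nia.
- have : (at_ - as_) * (bs - bt) <= N * yb by apply: leq_mul; lia.
  nia.
- have : (as_ - at_) * (bt - bs) <= ya * N by apply: leq_mul; lia.
  nia.
- nia.
Qed.

Lemma three_slices_bound (N a0 a1 a2 b0 b1 b2 c0 c1 c2 DA DB
    yA01 yA02 yA12 yB01 yB02 yB12 : nat) :
  a0 * b0 <= N * c0 -> a1 * b1 <= N * c1 -> a2 * b2 <= N * c2 ->
  a0 <= N -> a1 <= N -> a2 <= N -> b0 <= N -> b1 <= N -> b2 <= N ->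
  a0 <= yA01 + a1 -> a0 <= yA02 + a2 -> a1 <= yA12 + a2 ->
  b0 <= yB01 + b1 -> b0 <= yB02 + b2 -> b1 <= yB12 + b2 ->
  yA01 + yA02 + yA12 <= DA -> yB01 + yB02 + yB12 <= DB ->
  (a0 + a1 + a2) * (b0 + b1 + b2) <= 3 * N * (c0 + c1 + c2 + DA + DB).
Proof.
move=> *.
have p01 := @cross_le_diag N a0 a1 b0 b1 yA01 yB01.
have p02 := @cross_le_diag N a0 a2 b0 b2 yA02 yB02.
have p12 := @cross_le_diag N a1 a2 b1 b2 yA12 yB12.
have drops : N * (yA01 + yB01 + (yA02 + yB02) + (yA12 + yB12)) <= N * (DA + DB).
  by apply: leq_mul; lia.
nia.
Qed.

Lemma card_by_value (T I : finType) (X : {set T}) (f : T -> I) :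
  #|X| = \sum_(s : I) #|[set x in X | f x == s]|.
Proof.
rewrite -sum1_card (partition_big f xpredT) //=.
apply: eq_bigr => s _; rewrite -sum1_card; apply: eq_bigl => x; by rewrite inE.
Qed.

Definition o0 : 'I_3 := @Ordinal 3 0 isT.
Definition o1 : 'I_3 := @Ordinal 3 1 isT.
Definition o2 : 'I_3 := @Ordinal 3 2 isT.

Lemma sum_ord3 (F : 'I_3 -> nat) : \sum_(s < 3) F s = F o0 + F o1 + F o2.
Proof.
rewrite !big_ord_recr big_ord0 /= add0n.
by congr (_ + _ + _); congr F; apply/val_inj.
Qed.

Lemma setcK n (u : cube n) i s t : setc (setc u i t) i s = setc u i s.
Proof. by apply/ffunP => j; rewrite !ffunE; case: (j == i). Qed.

Lemma setc_id n (u : cube n) i : setc u i (u i) = u.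
Proof. by apply/ffunP => j; rewrite !ffunE; case: (j =P i) => [->|]. Qed.

Definition subcube n (k : nat) (v : cube n) : {set cube n} :=
  [set u : cube n | [forall j : 'I_n, (k <= j)%N ==> (u j == v j)]].

Definition border_in n (S : {set cube n}) (i : 'I_n) (X : {set cube n}) : nat :=
  #|[set p in border_dir S i | p.1 \in X]|.

Definition subcube_border n (S : {set cube n}) (k : nat) (v : cube n) : nat :=
  \sum_(i < n | (i < k)%N) border_in S i (subcube k v).

Definition slice_edges n (S : {set cube n}) (K : 'I_n) (v : cube n) (s t : 'I_3) :=
  [set p in border_dir S K | (p.1 \in subcube K (setc v K s)) && (p.2 == t)].

Section Slices.
Variables (n k : nat) (K : 'I_n).
Hypothesis val_K : val K = k.

Lemma neq_K (j : 'I_n) : (k < j)%N -> (j == K) = false.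
Proof. by move=> lt_kj; apply/negbTE/eqP => e; move: lt_kj; rewrite e val_K ltnn. Qed.

Lemma in_slice (v : cube n) (s : 'I_3) (u : cube n) :
  (u \in subcube k (setc v K s)) = (u \in subcube k.+1 v) && (u K == s).
Proof.
rewrite !inE; apply/forallP/andP.
- move=> H; split.
  + apply/forallP => j; apply/implyP => lt_kj.
    by have := implyP (H j) (ltnW lt_kj); rewrite ffunE neq_K.
  + have le_kK : (k <= K)%N by rewrite val_K.
    by have := implyP (H K) le_kK; rewrite ffunE eqxx.
- case=> /forallP H /eqP uK j; apply/implyP => le_kj; rewrite ffunE.
  case: (j =P K) => [->|ne]; first by rewrite uK.
  apply: (implyP (H j)); rewrite ltn_neqAle le_kj andbT -val_K.
  by apply/eqP => e; apply: ne; apply/val_inj.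
Qed.

Lemma setc_subcube (u v : cube n) (t : 'I_3) :
  u \in subcube k.+1 v -> setc u K t \in subcube k.+1 v.
Proof.
rewrite !inE => /forallP H; apply/forallP => j; apply/implyP => lt_kj.
by rewrite ffunE neq_K //; exact: (implyP (H j)).
Qed.

Lemma card_slices (S : {set cube n}) (v : cube n) :
  #|S :&: subcube k.+1 v| = \sum_(s < 3) #|S :&: subcube k (setc v K s)|.
Proof.
rewrite (card_by_value _ (fun u : cube n => u K)); apply: eq_bigr => s _.
apply: eq_card => u; rewrite in_set [X in _ = X]in_setI in_slice in_setI andbA.
by [].
Qed.

Lemma border_in_slices (S : {set cube n}) (i : 'I_n) (v : cube n) :
  border_in S i (subcube k.+1 v) = \sum_(s < 3) border_in S i (subcube k (setc v K s)).
Proof.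
rewrite /border_in (card_by_value _ (fun p : cube n * 'I_3 => p.1 K)).
apply: eq_bigr => s _; apply: eq_card => p.
by rewrite in_set [X in _ = X]in_set in_slice in_set andbA.
Qed.

Lemma border_in_K (S : {set cube n}) (v : cube n) :
  border_in S K (subcube k.+1 v) = \sum_(s < 3) \sum_(t < 3) #|slice_edges S K v s t|.
Proof.
rewrite border_in_slices; apply: eq_bigr => s _.
rewrite /border_in (card_by_value _ (fun p : cube n * 'I_3 => p.2)).
apply: eq_bigr => t _; apply: eq_card => p.
by rewrite in_set [X in _ = X]in_set in_set -val_K andbA.
Qed.

Lemma subcube_border_step (S : {set cube n}) (v : cube n) :
  subcube_border S k.+1 v =
  \sum_(s < 3) subcube_border S k (setc v K s) + border_in S K (subcube k.+1 v).
Proof.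
rewrite /subcube_border (bigD1 K) /=; last by rewrite val_K.
rewrite addnC; congr (_ + _); rewrite exchange_big /=.
apply: eq_big => i; last by move=> _; exact: border_in_slices.
by rewrite ltnS ltn_neqAle andbC -val_K.
Qed.

(* Every point of S in slice s either has its slice-t neighbour in S or
   yields a border edge from s to t. *)
Lemma slice_card_le (S : {set cube n}) (v : cube n) (s t : 'I_3) : (s < t)%N ->
  #|S :&: subcube k (setc v K s)|
    <= #|slice_edges S K v s t| + #|S :&: subcube k (setc v K t)|.
Proof.
move=> lt_st.
have cover : S :&: subcube k (setc v K s) \subset
    (fst @: slice_edges S K v s t) :|: ((fun w => setc w K s) @: (S :&: subcube k (setc v K t))).
  apply/subsetP => u; rewrite in_setI => /andP [uS uC].
  have /andP [uC1 /eqP uK] : (u \in subcube k.+1 v) && (u K == s) by rewrite -in_slice.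
  case nbS: (setc u K t \in S).
  - apply/setUP; right; apply/imsetP; exists (setc u K t).
      by rewrite in_setI nbS in_slice (setc_subcube _ uC1) ffunE !eqxx.
    by rewrite setcK -uK setc_id.
  - apply/setUP; left; apply/imsetP; exists (u, t) => //.
    by rewrite in_set /= val_K uC eqxx andbT in_set /= uS nbS uK lt_st.
apply: leq_trans (subset_leq_card cover) _.
apply: leq_trans (leq_of_leqif (leq_card_setU _ _)) _.
by apply: leq_add; apply: leq_imset_card.
Qed.

End Slices.

Lemma subcube0 n (v u : cube n) : u \in subcube 0 v -> u = v.
Proof.
rewrite inE => /forallP H; apply/ffunP => j.
by move/implyP: (H j) => /(_ (leq0n _)) /eqP.
Qed.

Lemma card_subcube n k (S : {set cube n}) (v : cube n) :
  (k <= n)%N -> #|S :&: subcube k v| <= 3 ^ k.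
Proof.
elim: k v => [|k IH] v le_kn.
- have sub : S :&: subcube 0 v \subset [set v].
    by apply/subsetP => u /setIP [_ /subcube0 ->]; rewrite in_set1.
  by apply: leq_trans (subset_leq_card sub) _; rewrite cards1.
- pose K := Ordinal le_kn; have val_K : val K = k by [].
  rewrite (card_slices val_K) sum_ord3 expnS.
  have := IH (setc v K o0) (ltnW le_kn); have := IH (setc v K o1) (ltnW le_kn).
  have := IH (setc v K o2) (ltnW le_kn); lia.
Qed.

Lemma subcube_product_bound n (A B : {set cube n}) : [disjoint A & B] ->
  forall k (v : cube n), (k <= n)%N ->
  #|A :&: subcube k v| * #|B :&: subcube k v|
    <= 3 ^ k * (subcube_border A k v + subcube_border B k v).
Proof.
move=> disjAB; elim=> [|k IH] v le_kn.
- have [->|[u]] := set_0Vmem (A :&: subcube 0 v); first by rewrite cards0.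
  have [->|[w]] := set_0Vmem (B :&: subcube 0 v); first by rewrite cards0 muln0.
  move=> /setIP [wB /subcube0 wv] /setIP [uA /subcube0 uv].
  by move: uA wB; rewrite uv wv => vA; rewrite (disjointFr disjAB vA).
- pose K := Ordinal le_kn; have val_K : val K = k by [].
  rewrite !(card_slices val_K) !(subcube_border_step val_K) !(border_in_K val_K) !sum_ord3 expnS.
  have IHs s := IH (setc v K s) (ltnW le_kn).
  have size S s : #|S :&: subcube k (setc v K s)| <= 3 ^ k.
    exact: card_subcube (ltnW le_kn).
  have cmp S (s t : 'I_3) := @slice_card_le n k K val_K S v s t.
  have := three_slices_bound (IHs o0) (IHs o1) (IHs o2)
    (size A o0) (size A o1) (size A o2) (size B o0) (size B o1) (size B o2)
    (cmp A o0 o1 isT) (cmp A o0 o2 isT) (cmp A o1 o2 isT)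
    (cmp B o0 o1 isT) (cmp B o0 o2 isT) (cmp B o1 o2 isT) (leqnn _) (leqnn _).
  lia.
Qed.

Local Open Scope ring_scope.

Theorem proposition3p5 (n : nat) (A B : {set cube n}) :
  [disjoint A & B] ->
  ((3 ^ n)%:R)^-1 * (#|A|)%:R * (#|B|)%:R
    <= ((border_card A + border_card B)%N)%:R :> rat.
Proof.
move=> disjAB.
pose v : cube n := [ffun => ord0].
have whole : subcube n v = setT.
  by apply/setP => u; rewrite !inE; apply/forallP => j; rewrite leqNgt ltn_ord.
have border_whole (S : {set cube n}) : subcube_border S n v = border_card S.
  rewrite /subcube_border /border_card; apply: eq_big => [i|i _]; first by rewrite ltn_ord.
  by rewrite /border_in whole; apply: eq_card => p; rewrite in_set in_setT andbT.
have := subcube_product_bound disjAB v (leqnn n).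
rewrite !border_whole whole !setIT => bound.
by rewrite -mulrA ler_pdivrMl ?ltr0n ?expn_gt0 // -!natrM ler_nat.
Qed.
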